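(* The size $z_{SSsr}$ of the self-referencing LZSS factorization satisfies (the alphabet being allowed to contain as many distinct characters as needed): substitutions: $\liminf_{n\to\infty}\mathsf{MS}_{\mathrm{sub}}(z_{SSsr},n)\ge 3$, $\mathsf{AS}_{\mathrm{sub}}(z_{SSsr},n)\ge 2z_{SSsr}-\Theta(\sqrt{z_{SSsr}})$ and $\mathsf{AS}_{\mathrm{sub}}(z_{SSsr},n)=\Omega(\sqrt n)$; insertions: $\liminf_{n\to\infty}\mathsf{MS}_{\mathrm{ins}}(z_{SSsr},n)\ge 2$, $\mathsf{AS}_{\mathrm{ins}}(z_{SSsr},n)\ge z_{SSsr}-\Theta(\sqrt{z_{SSsr}})$ and $\mathsf{AS}_{\mathrm{ins}}(z_{SSsr},n)=\Omega(\sqrt n)$; deletions: $\liminf_{n\to\infty}\mathsf{MS}_{\mathrm{del}}(z_{SSsr},n)\ge 3$, $\mathsf{AS}_{\mathrm{del}}(z_{SSsr},n)\ge 2z_{SSsr}-\Theta(\sqrt{z_{SSsr}})$ and $\mathsf{AS}_{\mathrm{del}}(z_{SSsr},n)=\Omega(\sqrt n)$.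
   Context: $\mathsf{ed}$ is the edit distance. $\mathsf{MS}_{\mathrm{sub}}(C,n)=\max_{T\in\Sigma^n}\{C(T')/C(T): T'\in\Sigma^n,\ \mathsf{ed}(T,T')=1\}$, with $\mathsf{MS}_{\mathrm{ins}},\mathsf{MS}_{\mathrm{del}}$ analogous for $T'$ of length $n+1$, resp. $n-1$, and $\mathsf{AS}_\ast$ analogous with $C(T')-C(T)$. Bounds in terms of $z_{SSsr}$ refer to $z_{SSsr}(T)$ of the original string and assert existence of strings $T$ (with $z_{SSsr}(T)$ arbitrarily large) and edited $T'$ achieving them. The self-referencing LZSS factorization of $T$ is $T=f_1\cdots f_z$ where each $f_i$ is either the first occurrence in $T$ of a character, or the longest prefix of $f_i\cdots f_z$ that occurs at least twice in $f_1\cdots f_i$ (occurrences may overlap); $z_{SSsr}(T)=z$. *)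

From mathcomp Require Import all_boot.
From Stdlib Require Import Reals.

Set Implicit Arguments.
Unset Strict Implicit.
Unset Printing Implicit Defensive.

Notation string := (seq nat).

Fixpoint ed (s t : string) {struct s} : nat :=
  match s with
  | [::] => size t
  | x :: s' =>
      (fix ed_s (t : string) : nat :=
         match t with
         | [::] => size s
         | y :: t' => minn (minn (ed s' t).+1 (ed_s t').+1) (ed s' t' + (x != y))
         end) t
  end.

Definition occ_count (u t : string) : nat :=
  count (fun q => take (size u) (drop q t) == u) (iota 0 (size t)).

(* Length of the self-referencing LZSS factor starting at position p of T
   (T[0..p) already factorized):
   - 1 if T[p] is the first occurrence of that character in T;
   - otherwise the length l of the longest prefix of T[p..] that occurs at
     least twice in T[0..p+l) (= f_1 ... f_i; occurrences may overlap). *)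
Definition lzss_flen (T : string) (p : nat) : nat :=
  let s := drop p T in
  if nth 0 T p \notin take p T then 1
  else foldr maxn 0
         [seq l <- iota 0 (size s).+1 | 2 <= occ_count (take l s) (take (p + l) T)].

Fixpoint lzss_count (fuel : nat) (T : string) (p : nat) : nat :=
  match fuel with
  | 0 => 0
  | fuel'.+1 =>
      if p < size T then (lzss_count fuel' T (p + lzss_flen T p)).+1 else 0
  end.

(* z_SSsr(T): number of factors of the self-referencing LZSS factorization.
   Every factor has length >= 1, so size T is enough fuel. *)
Definition zSSsr (T : string) : nat := lzss_count (size T) T 0.

From mathcomp Require Import all_boot.
From Stdlib Require Import Reals.
From mathcomp Require Import zify.
From Stdlib Require Import Lra Setoid.

Set Implicit Arguments.
Unset Strict Implicit.
Unset Printing Implicit Defensive.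

(* Fix s >= 2 and let L = (3(s-1))^s ... 3^s 0^s and R = (1 4 ... 3s-2)^s, so that the
   symbols of L and R are 0 and 1 modulo 3, while those of the middle word M are 2.  The
   gadget G_k = (suffix of L of length k) 2 (prefix of R of length k) occurs in L 2 R, so the
   text X = L 2 R G_1 ... G_{s^2} (padded with a fresh symbol) has at most s^2 + 3s + 4
   phrases.  Conversely the pair of symbols across the start of G_k occurs nowhere else,
   which forces a phrase start there, hence z(X) >= s^2.  Replacing the 2 between L and R
   by a fresh symbol, or deleting it, leaves neither half of any gadget with an earlier
   occurrence, which forces two more phrase starts inside every gadget: z >= 3 s^2.
   Inserting a fresh symbol just before that 2 only destroys the left halves: z >= 2 s^2.
   Letting s grow gives the multiplicative and additive bounds, and s ~ n^(1/4) gives the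
   Omega(sqrt n) bounds. *)

(** * Greedy parsings *)

Definition matches (T : string) (q p l : nat) :=
  forall i, i < l -> nth 0 T (q + i) = nth 0 T (p + i).

Lemma matches_shift T q p l d l' :
  matches T q p l -> d + l' <= l -> matches T (q + d) (p + d) l'.
Proof. by move=> hm hl i hi; rewrite -!addnA; apply: hm; lia. Qed.

Lemma window_eqP T p q l : p + l <= size T -> q <= p ->
  reflect (matches T q p l) (take l (drop q (take (p + l) T)) == take l (drop p T)).
Proof.
move=> hs hq; apply: (iffP eqP) => [e i hi | hm].
  have := congr1 (nth 0 ^~ i) e; rewrite !nth_take // !nth_drop nth_take //; lia.
apply: (@eq_from_nth _ 0) => [|i]; rewrite !size_take_min !size_drop !size_take_min; first lia.
move=> hi; rewrite !nth_take ?nth_drop ?nth_take; try lia.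
by apply: hm; lia.
Qed.

Lemma occ_count_ge2P T p l : p + l <= size T -> 0 < l ->
  reflect (exists2 q, q < p & matches T q p l)
          (1 < occ_count (take l (drop p T)) (take (p + l) T)).
Proof.
case: l => // l hs _.
have hd : l.+1 <= size (drop p T) by rewrite size_drop; lia.
rewrite /occ_count (size_takel hs) (size_takel hd).
rewrite iotaD add0n /=.
set P := fun q => _ == _.
have Pp : P p by rewrite /P addnC -take_drop take_takel.
have notP q : p < q -> ~~ P q.
  move=> hq; apply/negP => /eqP/(congr1 size).
  by rewrite (size_takel hd) size_take_min size_drop (size_takel hs); lia.
rewrite count_cat /= Pp.
have -> : count P (iota p.+1 l) = 0.
  rewrite (@eq_in_count _ _ pred0) ?count_pred0 // => q.
  by rewrite mem_iota => /andP[hq _]; apply/negbTE/notP.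
rewrite addn0 addn1 ltnS -has_count.
apply: (iffP hasP) => [[q] | [q hq hm]].
  by rewrite mem_iota => /andP[_ hq] /window_eqP hm; exists q => //; apply: hm; lia.
by exists q; rewrite ?mem_iota //; apply/window_eqP => //; lia.
Qed.
Lemma bigmax_seq_eq0_or_cond (r : seq nat) (P : pred nat) :
  \max_(l <- r | P l) l = 0 \/ P (\max_(l <- r | P l) l).
Proof.
elim/big_ind: _ => [| x y hx hy | l Pl]; [by left | | by right].
by rewrite /maxn; case: ltnP.
Qed.

Lemma earlier_charP T p : p <= size T ->
  reflect (exists2 q, q < p & nth 0 T q = nth 0 T p) (nth 0 T p \in take p T).
Proof.
move=> hp; apply: (iffP (nthP 0)) => [] [q]; rewrite size_takel // => hq e;
  by exists q; rewrite ?size_takel // ?nth_take // in e *.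
Qed.

Definition longest_copy (T : string) (p : nat) : nat :=
  \max_(l <- iota 0 (size T - p).+1
          | 1 < occ_count (take l (drop p T)) (take (p + l) T)) l.

Lemma lzss_flenE T p :
  lzss_flen T p = if nth 0 T p \in take p T then longest_copy T p else 1.
Proof. by rewrite /lzss_flen /longest_copy foldrE big_filter size_drop; case: (_ \in _). Qed.

Section FactorLength.
Variables (T : string) (p : nat).
Hypothesis hp : p < size T.

Lemma lzss_flen_le : p + lzss_flen T p <= size T.
Proof.
rewrite lzss_flenE; case: ifP => _; last lia.
suff : longest_copy T p <= size T - p by lia.
by apply/bigmax_leqP_seq => l; rewrite mem_iota; lia.
Qed.

Lemma lzss_flen_max l : p + l <= size T -> (exists2 q, q < p & matches T q p l) ->
  l <= lzss_flen T p.
Proof.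
case: l => // l hl [q hq hm]; rewrite lzss_flenE ifT; last first.
  by apply/earlier_charP; [lia | exists q => //; have := hm 0; rewrite !addn0; apply].
apply: (leq_bigmax_seq l.+1); first by rewrite mem_iota; lia.
by apply/occ_count_ge2P => //; exists q.
Qed.

Lemma lzss_flen_gt0 : 0 < lzss_flen T p.
Proof.
case: (boolP (nth 0 T p \in take p T)) => [/earlier_charP [|q hq e] | fresh]; first lia.
  by apply: lzss_flen_max; [lia | exists q => // i; rewrite ltnS leqn0 => /eqP->; rewrite !addn0].
by rewrite lzss_flenE (negbTE fresh).
Qed.

Lemma lzss_flen_copy : 1 < lzss_flen T p -> exists2 q, q < p & matches T q p (lzss_flen T p).
Proof.
move=> h2; have h0 : 0 < lzss_flen T p by lia.
apply: (elimT (occ_count_ge2P lzss_flen_le h0)).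
have Ecopy : lzss_flen T p = longest_copy T p.
  by move: h2; rewrite !lzss_flenE; case: (_ \in _).
rewrite Ecopy /longest_copy in h2 *.
have [e | occ] := bigmax_seq_eq0_or_cond (iota 0 (size T - p).+1)
  (fun l => 1 < occ_count (take l (drop p T)) (take (p + l) T)); last exact: occ.
by rewrite e in h2.
Qed.

End FactorLength.
Definition phrase (T : string) (p e : nat) :=
  e = p.+1 \/ exists2 q, q < p & matches T q p (e - p).

Inductive parsing (T : string) : nat -> nat -> nat -> Prop :=
| parsing0 p : parsing T p p 0
| parsingS p e f m : p < e -> phrase T p e -> parsing T e f m -> parsing T p f m.+1.

Lemma parsing_le T p f m : parsing T p f m -> p <= f.
Proof. by elim=> // p' e f' m' hpe _ _ hef; apply: ltnW (leq_trans hpe hef). Qed.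

Lemma parsing_cat T p e f m1 m2 :
  parsing T p e m1 -> parsing T e f m2 -> parsing T p f (m1 + m2).
Proof.
elim=> // p' e' f' m hpe he _ IH hf; rewrite addSn; exact: parsingS hpe he (IH hf).
Qed.

Lemma parsing_phrase T p e : p < e -> phrase T p e -> parsing T p e 1.
Proof. by move=> hpe he; apply: parsingS hpe he (parsing0 _ _). Qed.

Lemma parsing_chars T p t : parsing T p (p + t) t.
Proof.
elim: t p => [|t IH] p; first by rewrite addn0; apply: parsing0.
by rewrite addnS -addSn; apply: parsingS (IH p.+1); [|left].
Qed.

Lemma phrase_suffix T p p' e : phrase T p e -> p <= p' < e -> phrase T p' e.
Proof.
move=> [->|[q hq hm]] /andP[h1 h2]; first by left; lia.
right; exists (q + (p' - p)); first lia.
by rewrite -[X in matches _ _ X](subnKC h1); apply: matches_shift hm _; lia.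
Qed.

Lemma phrase_end_le_lzss T p e : p < size T -> e <= size T -> phrase T p e ->
  e <= p + lzss_flen T p.
Proof.
move=> hp he [-> | hc]; first by have := lzss_flen_gt0 hp; lia.
by have := lzss_flen_max hp (_ : p + (e - p) <= size T) hc; lia.
Qed.

(* Phrases are closed under taking suffixes, so the greedy factor starting inside a phrase
   reaches at least the end of that phrase. *)
Lemma lzss_count_le_parsing T fuel p p' m : parsing T p (size T) m -> p <= p' ->
  lzss_count fuel T p' <= m.
Proof.
move=> hs0; have [f hs eT] : exists2 f, parsing T p f m & f = size T by exists (size T).
elim: hs fuel p' eT {hs0} => [p0 | p0 e f' m0 hpe hph hs IH] [|fuel] p' //= eT hp.
  by rewrite ifN // -leqNgt -eT.
case: ifP => // hp'; case: (ltnP p' e) => he.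
  have hef := parsing_le hs; rewrite eT in hef.
  have := phrase_end_le_lzss hp' hef (phrase_suffix hph (_ : p0 <= p' < e)).
  by move=> /(_ _) h; have := IH fuel _ eT (h _); lia.
by have := IH fuel.+1 p' eT he; rewrite /= hp' => /leqW.
Qed.

Lemma zSSsr_le_parsing T m : parsing T 0 (size T) m -> zSSsr T <= m.
Proof. by move=> hs; apply: lzss_count_le_parsing hs _. Qed.
Fixpoint lzss_starts (fuel : nat) (T : string) (p : nat) : seq nat :=
  match fuel with
  | 0 => [::]
  | fuel'.+1 => if p < size T then p :: lzss_starts fuel' T (p + lzss_flen T p) else [::]
  end.

Lemma lzss_countE fuel T p : lzss_count fuel T p = size (lzss_starts fuel T p).
Proof. by elim: fuel p => //= fuel IH p; case: ifP => //= _; rewrite IH. Qed.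

Lemma lzss_starts_cover T fuel p x : p <= x < size T -> size T <= p + fuel ->
  exists2 y, y \in lzss_starts fuel T p & y <= x < y + lzss_flen T y.
Proof.
elim: fuel p => [|fuel IH] p /andP[hpx hx] hfuel; first lia.
have hp : p < size T by lia.
rewrite /= hp; case: (ltnP x (p + lzss_flen T p)) => hxp.
  by exists p; rewrite ?inE ?eqxx ?hpx.
have hg := lzss_flen_gt0 hp.
have [||y hy hxy] := IH (p + lzss_flen T p); [by rewrite hxp hx | lia |].
by exists y; rewrite // inE hy orbT.
Qed.

Lemma lzss_start_in_window T x l : 0 < l -> x + l < size T ->
  (forall q, q < x -> ~ matches T q x l.+1) ->
  exists2 y, y \in lzss_starts (size T) T 0 & x < y <= x + l.
Proof.
move=> hl hs fresh.
have [||y hy /andP[hyx hxy]] := @lzss_starts_cover T (size T) 0 (x + l); [exact: hs | by [] |].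
case: (ltnP x y) => [hxy' | hyx']; first by exists y; rewrite ?hxy' ?hyx.
have hy' : y < size T by lia.
have [|q hq hm] := lzss_flen_copy hy'; first lia.
exfalso; apply: (fresh (q + (x - y))); first lia.
by rewrite -[X in matches _ _ X](subnKC hyx'); apply: matches_shift hm _; lia.
Qed.

Definition count_in (s : seq nat) (lo hi : nat) : nat := count (fun y => lo <= y < hi) s.

Lemma count_in_split s lo mid hi : lo <= mid <= hi ->
  count_in s lo hi = count_in s lo mid + count_in s mid hi.
Proof.
move=> /andP[h1 h2]; rewrite /count_in -count_predUI.
rewrite [X in _ + X](@eq_count _ _ pred0) ?count_pred0 ?addn0 => [|y /=]; last lia.
by apply: eq_count => y /=; lia.
Qed.

Lemma count_in_gt0 s lo hi y : y \in s -> lo <= y < hi -> 0 < count_in s lo hi.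
Proof. by move=> hy hlo; rewrite /count_in -has_count; apply/hasP; exists y. Qed.

Lemma zSSsr_ge_blocks T (f : nat -> nat) c K : (forall k, f k <= f k.+1) ->
  (forall k, 0 < k <= K -> c <= count_in (lzss_starts (size T) T 0) (f k) (f k.+1)) ->
  c * K <= zSSsr T.
Proof.
move=> hf hc; rewrite /zSSsr lzss_countE; set S := lzss_starts _ _ _.
apply: leq_trans (count_size (fun y => f 1 <= y < f K.+1) S).
elim: K hc => [|K IH] hc; first by rewrite muln0.
have h1 : f 1 <= f K.+1 by elim: K {IH hc} => // K IH; apply: leq_trans IH (hf _).
rewrite -/(count_in S _ _) (@count_in_split _ _ (f K.+1)) ?h1 ?hf // mulnS addnC.
by apply: leq_add; [apply: IH => k hk | ]; apply: hc; lia.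
Qed.

(** * The texts *)

(* [text M s n] is the length-n prefix of L M R G_1 ... G_{s^2} 8 8 ...  After R, the
   gadget G_k of length 2k + 1 occupies the offsets r - 1 with k^2 <= r < (k + 1)^2, so
   that [Nat.sqrt] recovers k. *)
Definition lchar (s i : nat) : nat := 3 * ((s * s - 1 - i) %/ s).
Definition rchar (s j : nat) : nat := 3 * (j %% s) + 1.
Definition gadget_char (s k o : nat) : nat :=
  if o < k then lchar s (s * s - k + o) else if o == k then 2 else rchar s (o - k - 1).

Definition tail_char (s j : nat) : nat :=
  if j < s * s then rchar s j else
  let k := Nat.sqrt (j - s * s).+1 in
  if k <= s * s then gadget_char s k ((j - s * s).+1 - k * k) else 8.

Definition text_char (M : string) (s i : nat) : nat :=
  if i < s * s then lchar s i
  else if i < s * s + size M then nth 0 M (i - s * s)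
  else tail_char s (i - s * s - size M).

Definition text (M : string) (s n : nat) : string := mkseq (text_char M s) n.

Definition gadget_pos (M : string) (s k : nat) : nat := s * s + size M + s * s + k * k - 1.

Definition text_len (M : string) (s : nat) : nat := gadget_pos M s (s * s).+1.

Section TextChars.
Variables (M : string) (s : nat).

Lemma text_char_L i : i < s * s -> text_char M s i = lchar s i.
Proof. by move=> h; rewrite /text_char h. Qed.

Lemma text_char_M i : s * s <= i < s * s + size M -> text_char M s i = nth 0 M (i - s * s).
Proof. by move=> /andP[h1 h2]; rewrite /text_char h2 ifN // -leqNgt. Qed.

Lemma text_char_R i : s * s + size M <= i < s * s + size M + s * s ->
  text_char M s i = rchar s (i - s * s - size M).
Proof.
move=> /andP[h1 h2]; rewrite /text_char !ifN -?leqNgt //; try lia.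
by rewrite /tail_char ifT //; lia.
Qed.

Lemma gadget_posS k : 0 < k -> gadget_pos M s k + 2 * k + 1 = gadget_pos M s k.+1.
Proof. by rewrite /gadget_pos => h; nia. Qed.

Lemma leq_gadget_pos j k : j <= k -> gadget_pos M s j <= gadget_pos M s k.
Proof. by rewrite /gadget_pos => h; nia. Qed.

Lemma gadget_end_lt_text_len k : 0 < k <= s * s -> gadget_pos M s k + 2 * k < text_len M s.
Proof.
move=> /andP[k1 k2]; have := leq_gadget_pos (_ : k.+1 <= (s * s).+1).
by rewrite -gadget_posS // /text_len; lia.
Qed.

Lemma text_char_G k o : 0 < k <= s * s -> o <= 2 * k ->
  text_char M s (gadget_pos M s k + o) = gadget_char s k o.
Proof.
rewrite /gadget_pos => /andP[k1 k2] ho; have hk : 1 <= k * k by nia.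
rewrite /text_char; do 2 (rewrite ifN; last lia); rewrite /tail_char ifN; last lia.
have -> : (s * s + size M + s * s + k * k - 1 + o - s * s - size M - s * s).+1 = k * k + o by lia.
have -> : Nat.sqrt (k * k + o) = k by apply: Nat.sqrt_unique; nia.
by rewrite k2; congr gadget_char; lia.
Qed.

Lemma text_char_pad i : text_len M s <= i -> text_char M s i = 8.
Proof.
rewrite /text_len /gadget_pos => h.
rewrite /text_char; do 2 (rewrite ifN; last lia); rewrite /tail_char ifN /=; last lia.
set r := (_ - _).+1; rewrite ifN // -ltnNge; have := Nat.sqrt_spec r (Nat.le_0_l _).
have : (s * s).+1 * (s * s).+1 <= r by rewrite /r; lia.
by move: (Nat.sqrt r) => k; nia.
Qed.

Lemma gadget_decomp i : s * s + size M + s * s <= i < text_len M s ->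
  exists k o, [/\ 0 < k <= s * s, o <= 2 * k & i = gadget_pos M s k + o].
Proof.
rewrite /text_len /gadget_pos => /andP[h1 h2].
set r := (i - (s * s + size M + s * s)).+1; have := Nat.sqrt_spec r (Nat.le_0_l _).
move: (Nat.sqrt r) => k hk; exists k, (r - k * k).
have k1 : 0 < k by nia.
have k2 : k <= s * s by nia.
rewrite k1 k2; split => //; nia.
Qed.

End TextChars.

Lemma size_text M s n : size (text M s n) = n.
Proof. exact: size_mkseq. Qed.

Lemma nth_text M s n i : i < n -> nth 0 (text M s n) i = text_char M s i.
Proof. exact: nth_mkseq. Qed.

(** * Lower bounds *)

Lemma lchar_mod3 s i : lchar s i %% 3 = 0.
Proof. by rewrite /lchar; lia. Qed.

Lemma rchar_mod3 s j : rchar s j %% 3 = 1.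
Proof. by rewrite /rchar; lia. Qed.

Lemma gadget_char_lt s k o : o < k <= s * s -> gadget_char s k o = 3 * ((k - 1 - o) %/ s).
Proof. by move=> /andP[ho hk]; rewrite /gadget_char ho /lchar; congr (3 * (_ %/ s)); lia. Qed.

Lemma gadget_char_mid s k : gadget_char s k k = 2.
Proof. by rewrite /gadget_char ltnn eqxx. Qed.

Lemma gadget_char_gt s k o : k < o -> gadget_char s k o = rchar s (o - k - 1).
Proof. by move=> h; rewrite /gadget_char ltnNge ltnW //= gtn_eqF. Qed.

Lemma gadget_char_mod3_lt s k o : o < k -> gadget_char s k o %% 3 = 0.
Proof. by move=> h; rewrite /gadget_char h lchar_mod3. Qed.

Section LowerBound.
Variables (M : string) (s : nat).
Hypothesis s_gt0 : 0 < s.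
Hypothesis M_mod3 : all (fun x => x %% 3 == 2) M.

Lemma nth_M_mod3 t : t < size M -> nth 0 M t %% 3 = 2.
Proof. by move=> h; apply/eqP/(allP M_mod3)/mem_nth. Qed.

(* Modulo 3, L, M and R read 0, 2 and 1, and every gadget reads 0..0 2 1..1: a step from
   class 1 to class 0 only happens at the start of a gadget. *)
Lemma mod3_rise_at_gadget q : q.+1 < text_len M s ->
  text_char M s q %% 3 = 1 -> text_char M s q.+1 %% 3 = 0 ->
  exists2 k, 0 < k <= s * s & q.+1 = gadget_pos M s k.
Proof.
move=> hn h1 h2.
case: (ltnP q (s * s)) => c1; first by move: h1; rewrite text_char_L // lchar_mod3.
case: (ltnP q (s * s + size M)) => c2.
  by move: h1; rewrite text_char_M ?nth_M_mod3 ?c1 //; lia.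
case: (ltnP q (s * s + size M + s * s)) => c3.
  case: (ltnP q.+1 (s * s + size M + s * s)) => c4.
    by move: h2; rewrite text_char_R ?rchar_mod3 // c4 andbT; lia.
  by exists 1; rewrite /gadget_pos; nia.
have hq : s * s + size M + s * s <= q < text_len M s by rewrite c3; lia.
have [j [o [/andP[j1 j2] jo eq]]] := gadget_decomp hq; subst q.
move: h1 h2; rewrite text_char_G ?j1 //.
case: (ltngtP o j) => oj; first by rewrite gadget_char_mod3_lt.
- case: (ltnP o (2 * j)) => o2.
    move=> _; rewrite -addnS text_char_G; [|lia|lia].
    by rewrite gadget_char_gt ?rchar_mod3 //; lia.
  move=> _ _; exists j.+1; last by rewrite -gadget_posS //; lia.
  rewrite (_ : o = 2 * j) in hn; last lia.
  rewrite ltnS /=; case: (leqP j.+1 (s * s)) => // hj.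
  have := leq_gadget_pos M s hj; have := gadget_posS M s j1; rewrite /text_len in hn; lia.
- by rewrite oj gadget_char_mid.
Qed.

Lemma gadget_boundary k : 0 < k <= s * s ->
  text_char M s (gadget_pos M s k - 1) = rchar s (k + s - 2) /\
  text_char M s (gadget_pos M s k) = 3 * ((k - 1) %/ s).
Proof.
move=> /andP[k1 k2]; split; last first.
  by rewrite -[gadget_pos M s k]addn0 text_char_G ?k1 ?k2 // gadget_char_lt ?k1 ?k2 ?subn0.
case: (ltnP 1 k) => kk.
- have e : gadget_pos M s k - 1 = gadget_pos M s k.-1 + 2 * k.-1.
    by have := gadget_posS M s (_ : 0 < k.-1); rewrite prednK; lia.
  rewrite e text_char_G; [|lia|lia]; rewrite gadget_char_gt; last lia.
  by rewrite /rchar (_ : k + s - 2 = (k - 2) + s) ?modnDr; [congr (3 * (_ %% s) + 1) | ]; lia.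
- have -> : k = 1 by lia.
  rewrite text_char_R /gadget_pos; last nia.
  have -> : s * s + size M + s * s + 1 * 1 - 1 - 1 - s * s - size M = (s - 1) * s + (s - 1) by nia.
  by rewrite /rchar modnMDl; congr (3 * (_ %% s) + 1); lia.
Qed.

Lemma gadget_boundary_inj j k : 0 < j -> 0 < k ->
  rchar s (j + s - 2) = rchar s (k + s - 2) -> (j - 1) %/ s = (k - 1) %/ s -> j = k.
Proof.
move=> j1 k1 /addIn /eqP; rewrite eqn_pmul2l // => /eqP + e2.
have [-> ->] : j + s - 2 = (j - 1) + (s - 1) /\ k + s - 2 = (k - 1) + (s - 1) by lia.
move/eqP; rewrite eqn_modDr => /eqP m2.
suff : j - 1 = k - 1 by lia.
by rewrite (divn_eq (j - 1) s) (divn_eq (k - 1) s) e2 m2.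
Qed.

Lemma text_char_eq2 p : p < text_len M s -> text_char M s p = 2 ->
  s * s <= p < s * s + size M \/ exists2 j, 0 < j <= s * s & p = gadget_pos M s j + j.
Proof.
move=> hn h.
case: (ltnP p (s * s)) => c1; first by move: (lchar_mod3 s p); rewrite -(text_char_L M) // h.
case: (ltnP p (s * s + size M)) => c2; first by left; apply/andP.
case: (ltnP p (s * s + size M + s * s)) => c3.
  by move: (rchar_mod3 s (p - s * s - size M)); rewrite -(@text_char_R M) ?c2 // h.
have hp : s * s + size M + s * s <= p < text_len M s by rewrite c3.
have [j [o [hj jo eq]]] := gadget_decomp hp; subst p.
right; exists j => //; move: h; rewrite text_char_G //.
case: (ltngtP o j) => [oj | oj | -> //].
- by move/(congr1 (modn^~ 3)); rewrite gadget_char_mod3_lt.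
- by rewrite gadget_char_gt // => /(congr1 (modn^~ 3)); rewrite rchar_mod3.
Qed.

Variable n : nat.
Hypothesis text_len_le : text_len M s <= n.
Local Notation T := (text M s n).

Lemma matches_text_char q p l : q <= p -> p + l <= n -> matches T q p l ->
  forall i, i < l -> text_char M s (q + i) = text_char M s (p + i).
Proof.
move=> hqp hl hm i hi; have := hm i hi.
by rewrite !nth_text; lia.
Qed.

Lemma gadget_start_fresh k : 0 < k <= s * s -> forall q, q < gadget_pos M s k - 1 ->
  ~ matches T q (gadget_pos M s k - 1) 2.
Proof.
move=> hk q hq hm; have /andP[k1 k2] := hk.
have hlen := gadget_end_lt_text_len M hk.
have [pa pb] := gadget_boundary hk.
have g1 : 0 < gadget_pos M s k by rewrite /gadget_pos; nia.
have e1 : text_char M s q = rchar s (k + s - 2).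
  rewrite -pa -!(@nth_text M s n); [|lia | lia].
  by have := hm 0; rewrite !addn0; apply.
have e2 : text_char M s q.+1 = 3 * ((k - 1) %/ s).
  rewrite -pb -!(@nth_text M s n); [|lia | lia].
  by have := hm 1; rewrite !addn1 subn1 prednK //; apply.
have [j hj ej] : exists2 j, 0 < j <= s * s & q.+1 = gadget_pos M s j.
  by apply: mod3_rise_at_gadget; rewrite ?e1 ?e2 ?rchar_mod3 //; lia.
have [qa qb] := gadget_boundary hj.
have /andP[j1 _] := hj.
have ejk : j = k.
  apply: gadget_boundary_inj => //; first by rewrite -qa -e1 -ej subn1.
  by apply/eqP; rewrite -(eqn_pmul2l (_ : 0 < 3)) // -qb -e2 -ej.
by move: hq; rewrite -ejk -ej; lia.
Qed.

Lemma gadget_left_fresh k : head 0 M != 2 -> 0 < k <= s * s ->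
  forall q, q < gadget_pos M s k ->
  ~ matches T q (gadget_pos M s k) k.+1.
Proof.
move=> hM hk q hq hm; have /andP[k1 k2] := hk.
have hlen := gadget_end_lt_text_len M hk.
have {}hm := matches_text_char (ltnW hq) (_ : _ + k.+1 <= n) hm.
have {}hm i : i <= k -> text_char M s (q + i) = gadget_char s k i.
  by move=> hi; rewrite hm ?text_char_G //; lia.
have h2 := hm k (leqnn k); rewrite gadget_char_mid in h2.
have mod0 i : i < k -> text_char M s (q + i) %% 3 = 0.
  by move=> hi; rewrite hm ?gadget_char_mod3_lt //; lia.
case: (text_char_eq2 _ h2) => [| /andP[c1 c2] | [j hj ej]]; first lia.
- have t0 : 0 < q + k - s * s.
    rewrite lt0n; apply: contraNneq hM => e; move: h2.
    by rewrite text_char_M ?c1 // e nth0 => ->.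
  have := mod0 k.-1 (ltac:(by rewrite ltn_predL)).
  by rewrite text_char_M ?nth_M_mod3 //; lia.
- have /andP[j1 j2] := hj.
  have jk : j < k by rewrite ltnNge; apply/negP => hkj; have := leq_gadget_pos M s hkj; lia.
  have g1 : 0 < gadget_pos M s j by rewrite /gadget_pos; nia.
  have := mod0 (k - j - 1) ltac:(lia).
  by rewrite (_ : q + (k - j - 1) = gadget_pos M s j - 1) ?(gadget_boundary hj).1 ?rchar_mod3; lia.
Qed.

Lemma gadget_right_fresh k : 2 \notin M -> 0 < k <= s * s ->
  forall q, q < gadget_pos M s k + k ->
  ~ matches T q (gadget_pos M s k + k) k.+1.
Proof.
move=> hM hk q hq hm; have /andP[k1 k2] := hk.
have hlen := gadget_end_lt_text_len M hk.
have {}hm := matches_text_char (ltnW hq) (_ : _ + k.+1 <= n) hm.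
have {}hm i : i <= k -> text_char M s (q + i) = gadget_char s k (k + i).
  by move=> hi; rewrite hm -?addnA ?text_char_G //; lia.
have h2 := hm 0 (leq0n k); rewrite !addn0 gadget_char_mid in h2.
case: (text_char_eq2 _ h2) => [| /andP[c1 c2] | [j hj ej]]; first lia.
  have hM' : nth 0 M (q - s * s) \in M by apply: mem_nth; rewrite ltn_subLR.
  by move: h2; rewrite text_char_M ?c1 // => e; rewrite -e hM' in hM.
have /andP[j1 j2] := hj.
have jk : j < k by rewrite ltnNge; apply/negP => hkj; have := leq_gadget_pos M s hkj; lia.
have := hm j.+1 jk; rewrite (_ : q + j.+1 = gadget_pos M s j.+1 + 0); last first.
  by rewrite -gadget_posS // ej; lia.
rewrite text_char_G ?(@gadget_char_gt s k (k + j.+1)); try lia.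
by move/(congr1 (modn^~ 3)); rewrite gadget_char_mod3_lt ?rchar_mod3.
Qed.

Local Notation starts := (lzss_starts (size T) T 0).

Lemma count_starts_window x l : 0 < l -> x + l < n ->
  (forall q, q < x -> ~ matches T q x l.+1) -> 0 < count_in starts x.+1 (x + l).+1.
Proof.
move=> hl hs fresh; have [|y hy hxy] := lzss_start_in_window hl _ fresh; first by rewrite size_text.
by apply: count_in_gt0 hy _; rewrite ltnS.
Qed.

Lemma count_starts_gadget k : 0 < k <= s * s ->
  1 + (head 0 M != 2) + (2 \notin M) <=
  count_in starts (gadget_pos M s k) (gadget_pos M s k.+1).
Proof.
move=> hk; have /andP[k1 k2] := hk.
have hlen := gadget_end_lt_text_len M hk.
have g1 : 0 < gadget_pos M s k by rewrite /gadget_pos; nia.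
rewrite -gadget_posS // (_ : _ + 2 * k + 1 = (gadget_pos M s k + k + k).+1); last lia.
rewrite (@count_in_split _ _ (gadget_pos M s k).+1) ?leqnSn ?ltnS; last lia.
rewrite (@count_in_split _ (gadget_pos M s k).+1 (gadget_pos M s k + k).+1); last lia.
rewrite -addnA; apply: leq_add; last apply: leq_add.
- have := count_starts_window (x := gadget_pos M s k - 1) (l := 1) _ _ (gadget_start_fresh hk).
  by rewrite subn1 addn1 prednK //; apply => //; lia.
- case: (head 0 M != 2) / boolP => // hB.
  by apply: count_starts_window (gadget_left_fresh hB hk); lia.
- case: (2 \notin M) / boolP => // hC.
  by apply: count_starts_window (gadget_right_fresh hC hk); lia.
Qed.

Lemma zSSsr_text_ge : (1 + (head 0 M != 2) + (2 \notin M)) * (s * s) <= zSSsr T.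
Proof.
apply: (@zSSsr_ge_blocks _ (gadget_pos M s)) => [k | k]; first exact: leq_gadget_pos.
exact: count_starts_gadget.
Qed.

End LowerBound.

(** * Upper bound for the unedited text *)

Lemma lchar_block s t u : t < s -> u < s -> lchar s (t * s + u) = 3 * (s - 1 - t).
Proof.
move=> ht hu; rewrite /lchar.
have -> : s * s - 1 - (t * s + u) = (s - 1 - t) * s + (s - 1 - u) by nia.
by rewrite divnMDl ?divn_small; lia.
Qed.

Section UpperBound.
Variables (s n : nat).
Hypothesis s_gt1 : 1 < s.
Hypothesis text_len_le : text_len [:: 2] s <= n.
Local Notation T := (text [:: 2] s n).

Lemma text_len2_gt : 2 * (s * s) + 1 < text_len [:: 2] s.
Proof. by rewrite /text_len /gadget_pos /=; nia. Qed.

Lemma copy_phrase p e q : q < p < e -> e <= n ->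
  (forall i, i < e - p -> text_char [:: 2] s (q + i) = text_char [:: 2] s (p + i)) ->
  phrase T p e.
Proof.
move=> /andP[hq hp] he hm; right; exists q => // i hi.
by rewrite !nth_text ?hm //; lia.
Qed.

Lemma parsing_left t : t <= s -> parsing T 0 (t * s) (2 * t).
Proof.
have hlen := text_len2_gt; elim: t => [|t IH] ht; first exact: parsing0.
rewrite mulSnr (_ : 2 * t.+1 = 2 * t + 2); last lia.
apply: parsing_cat (IH (ltnW ht)) _.
rewrite -[2]/(1 + 1); apply: (@parsing_cat _ _ (t * s).+1).
  by apply: parsing_phrase => //; left.
apply: parsing_phrase; first lia.
apply: (@copy_phrase _ _ (t * s)); [lia | nia | move=> i hi].
by rewrite !text_char_L ?addSnnS ?lchar_block //; nia.
Qed.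

Lemma parsing_right : parsing T (s * s + 1) (s * s + 1 + s * s) (s + 1).
Proof.
have hlen := text_len2_gt.
apply: (@parsing_cat _ _ (s * s + 1 + s)); first exact: parsing_chars.
apply: parsing_phrase; first nia.
apply: (@copy_phrase _ _ (s * s + 1)); [nia | nia | move=> i hi].
rewrite !text_char_R /=; try nia.
rewrite (_ : s * s + 1 + s + i - s * s - 1 = i + s); last lia.
by rewrite (_ : s * s + 1 + i - s * s - 1 = i) /rchar ?modnDr //; lia.
Qed.

Lemma parsing_gadget k : 0 < k <= s * s ->
  parsing T (gadget_pos [:: 2] s k) (gadget_pos [:: 2] s k.+1) 1.
Proof.
move=> hk; have /andP[k1 k2] := hk.
have hlen := gadget_end_lt_text_len [:: 2] hk; have e := gadget_posS [:: 2] s k1.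
have g : s * s + s * s <= gadget_pos [:: 2] s k by rewrite /gadget_pos /=; nia.
apply: parsing_phrase; first lia.
apply: (@copy_phrase _ _ (s * s - k)); [lia | lia | move=> i hi].
rewrite text_char_G; [|lia|lia].
case: (ltngtP i k) => ik.
- by rewrite text_char_L /gadget_char ?ik //; lia.
- rewrite text_char_R /=; last lia.
  by rewrite gadget_char_gt //; congr rchar; lia.
- by rewrite ik gadget_char_mid text_char_M /=; [rewrite (_ : _ - _ = 0) //|]; lia.
Qed.

Lemma parsing_gadgets K : K <= s * s ->
  parsing T (gadget_pos [:: 2] s 1) (gadget_pos [:: 2] s K.+1) K.
Proof.
elim: K => [|K IH] hK; first exact: parsing0.
have hK' : 0 < K.+1 <= s * s by rewrite ltn0Sn.
by have := parsing_cat (IH (ltnW hK)) (parsing_gadget hK'); rewrite addn1.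
Qed.

Lemma parsing_padding : exists2 m, m <= 2 & parsing T (text_len [:: 2] s) n m.
Proof.
case: (ltngtP n (text_len [:: 2] s).+1) => h.
- by exists 0 => //; rewrite (_ : n = text_len [:: 2] s); [exact: parsing0 | lia].
- exists 2 => //; apply: (@parsing_cat _ _ (text_len [:: 2] s).+1 _ 1 1).
    by apply: parsing_phrase => //; left.
  apply: parsing_phrase => //; apply: (@copy_phrase _ _ (text_len [:: 2] s)); [lia | lia |].
  by move=> i hi; rewrite !text_char_pad //; lia.
- by exists 1; rewrite // h; apply: parsing_phrase => //; left.
Qed.

Lemma zSSsr_text2_le : zSSsr T <= s * s + 3 * s + 4.
Proof.
have [m hm hpad] := parsing_padding.
suff : parsing T 0 (size T) (2 * s + 1 + (s + 1) + s * s + m).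
  by move/zSSsr_le_parsing; lia.
rewrite size_text; apply: parsing_cat hpad.
apply: parsing_cat _ (parsing_gadgets (leqnn _)).
rewrite (_ : gadget_pos [:: 2] s 1 = s * s + 1 + s * s); last by rewrite /gadget_pos /=; lia.
apply: parsing_cat parsing_right.
apply: parsing_cat (parsing_left (leqnn s)) _.
by apply: parsing_phrase; rewrite addn1 //; left.
Qed.

End UpperBound.

(** * Single edits *)

Lemma ed_cons x s t : ed (x :: s) (x :: t) <= ed s t.
Proof. by rewrite /= eqxx addn0 geq_minr. Qed.

Lemma ed_catl A u v : ed (A ++ u) (A ++ v) <= ed u v.
Proof. by elim: A => //= x A IH; apply: leq_trans (ed_cons _ _ _) IH. Qed.

Lemma ed_refl s : ed s s = 0.
Proof. by apply/eqP; rewrite -leqn0 -(cats0 s) (leq_trans (ed_catl _ _ _)). Qed.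

Lemma ed_gt0 s t : s != t -> 0 < ed s t.
Proof.
elim: s t => [|x s IH] [|y t] //= hst; rewrite !leq_min !ltnS !leq0n /=.
case: (eqVneq x y) => [exy | ]; last by rewrite addn1.
by rewrite addn0 IH //; apply: contraNneq hst => ->; rewrite exy.
Qed.

Lemma ed_subst1 (A B : string) (x y : nat) : x != y -> ed (A ++ x :: B) (A ++ y :: B) = 1.
Proof.
move=> hxy; apply/eqP; rewrite eqn_leq ed_gt0 ?andbT; last first.
  by rewrite eqseq_cat // eqseq_cons (negbTE hxy) andbF.
apply: leq_trans (ed_catl _ _ _) _.
by rewrite /= ed_refl; apply: leq_trans (geq_minr _ _) _; case: (x != y).
Qed.

Lemma ed_delete1 A B x : ed (A ++ x :: B) (A ++ B) = 1.
Proof.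
apply/eqP; rewrite eqn_leq ed_gt0 ?andbT; last first.
  by apply/eqP => /(congr1 size); rewrite !size_cat /=; lia.
apply: leq_trans (ed_catl _ _ _) _.
case: B => [|y B] //=; do 2 apply: leq_trans (geq_minl _ _) _.
by have := ed_refl (y :: B) => /= ->.
Qed.

Lemma ed_insert1 A B x : ed (A ++ B) (A ++ x :: B) = 1.
Proof.
apply/eqP; rewrite eqn_leq ed_gt0 ?andbT; last first.
  by apply/eqP => /(congr1 size); rewrite !size_cat /=; lia.
apply: leq_trans (ed_catl _ _ _) _.
case: B => [|y B] //=; apply: leq_trans (geq_minl _ _) _; apply: leq_trans (geq_minr _ _) _.
by have := ed_refl (y :: B) => /= ->.
Qed.

Lemma text_cat M s n : s * s + size M <= n ->
  text M s n = mkseq (lchar s) (s * s) ++ M ++ mkseq (tail_char s) (n - s * s - size M).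
Proof.
move=> hn; apply: (@eq_from_nth _ 0) => [|i].
  by rewrite size_text !size_cat !size_mkseq; lia.
rewrite size_text => hi; rewrite nth_text // /text_char nth_cat size_mkseq.
case: ifP => [h1 | /negbT h1]; first by rewrite nth_mkseq.
rewrite nth_cat; case: ifP => [h2 | /negbT h2]; first by rewrite ifT //; lia.
by rewrite ifN ?nth_mkseq; try lia; congr tail_char; lia.
Qed.

Section Edits.
Variables (s n : nat).
Hypothesis n_gt : s * s < n.

Lemma ed_text_subst : ed (text [:: 2] s n) (text [:: 5] s n) = 1.
Proof. by rewrite !text_cat /=; try lia; apply: ed_subst1. Qed.

Lemma ed_text_delete : ed (text [:: 2] s n) (text [::] s n.-1) = 1.
Proof.
rewrite !text_cat /= ?addn0 ?addn1; try lia.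
by rewrite (_ : n.-1 - s * s - 0 = n - s * s - 1) ?ed_delete1; lia.
Qed.

Lemma ed_text_insert : ed (text [:: 2] s n) (text [:: 5; 2] s n.+1) = 1.
Proof.
rewrite !text_cat /=; try lia.
by rewrite (_ : n.+1 - s * s - 2 = n - s * s - 1) ?(ed_insert1 _ (2 :: _)); lia.
Qed.

End Edits.

(** * Asymptotics *)

Lemma zSSsr_text2_bounds s n : 1 < s -> text_len [:: 2] s <= n ->
  s * s <= zSSsr (text [:: 2] s n) <= s * s + 3 * s + 4.
Proof.
move=> s1 hn; rewrite zSSsr_text2_le // andbT.
have s0 : 0 < s by lia.
have := zSSsr_text_ge s0 (isT : all (fun x => x %% 3 == 2) [:: 2]) hn.
by rewrite (_ : 1 + _ + _ = 1) // mul1n.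
Qed.

Lemma side_for_length n : 256 * 256 <= n ->
  let s := Nat.sqrt (Nat.sqrt n) %/ 2 in
  [/\ 8 <= s, text_len [:: 2] s <= n & n <= (9 * (s * s)) * (9 * (s * s))].
Proof.
move=> hn /=.
set u := Nat.sqrt n; set t := Nat.sqrt u; set s := t %/ 2.
have hu := Nat.sqrt_spec n (Nat.le_0_l _); rewrite -/u in hu.
have ht := Nat.sqrt_spec u (Nat.le_0_l _); rewrite -/t in ht.
have hs : s * 2 <= t <= s * 2 + 1.
  by have := divn_eq t 2; rewrite -/s; have := ltn_pmod t (isT : 0 < 2); lia.
have u256 : 256 <= u.
  by case: (leqP 256 u) => // hh; have := leq_mul hh hh; lia.
have t16 : 16 <= t.
  by case: (leqP 16 t) => // hh; have := leq_mul hh hh; lia.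
have s8 : 8 <= s by lia.
split => //.
- rewrite /text_len /gadget_pos /=.
  have h1 : 4 * (s * s) <= t * t by nia.
  have h2 : (4 * (s * s)) * (4 * (s * s)) <= (t * t) * (t * t) by apply: leq_mul.
  have h3 : (t * t) * (t * t) <= u * u by apply: leq_mul; lia.
  have h4 : (s * s).+1 * (s * s).+1 <= 2 * ((s * s) * (s * s)) by nia.
  nia.
- have h1 : u.+1 <= t.+1 * t.+1 by lia.
  have h2 : t.+1 * t.+1 <= 9 * (s * s) by nia.
  have h3 : u.+1 * u.+1 <= (9 * (s * s)) * (9 * (s * s)) by apply: leq_mul; lia.
  lia.
Qed.
Lemma leq_INR m n : m <= n -> (INR m <= INR n)%R.
Proof. by move/leP; apply: le_INR. Qed.

Lemma sqrt_ge (S z : R) : (0 <= S)%R -> (S * S <= z)%R -> (S <= sqrt z)%R.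
Proof. by move=> hS h; rewrite -(sqrt_square S hS); apply: sqrt_le_1_alt. Qed.

Section RealBounds.
Variables (a S z z' : R).
Hypothesis a_ge0 : (0 <= a)%R.
Hypothesis z_ge : (S * S <= z)%R.
Hypothesis z_le : (z <= S * S + 3 * S + 4)%R.
Hypothesis z'_ge : (a * (S * S) <= z')%R.

Lemma ratio_lower_bound eps : (2 <= S)%R -> (5 * a <= eps * S)%R -> (a - eps <= z' / z)%R.
Proof.
move=> hS heps; have z0 : (0 < z)%R by nra.
apply: (Rmult_le_reg_r z) => //; rewrite /Rdiv Rmult_assoc Rinv_l; last lra.
case: (Rle_dec (a - eps) 0) => c; first nra.
have : ((a - eps) * z <= (a - eps) * (S * S + 3 * S + 4))%R by apply: Rmult_le_compat_l; lra.
nra.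
Qed.

Lemma additive_lower_bound : (1 <= S)%R -> ((a - 1) * z - 7 * a * sqrt z <= z' - z)%R.
Proof.
move=> hS; have hsq := sqrt_ge (ltac:(lra) : (0 <= S)%R) z_ge.
have h1 : (a * S <= a * sqrt z)%R by apply: Rmult_le_compat_l.
have h2 : (a * z <= a * (S * S + 3 * S + 4))%R by apply: Rmult_le_compat_l.
have h3 : (a * 1 <= a * S)%R by apply: Rmult_le_compat_l.
lra.
Qed.

Lemma sqrt_lower_bound x : (2 <= a)%R -> (8 <= S)%R -> (sqrt x <= 9 * (S * S))%R ->
  (1 / 18 * sqrt x <= z' - z)%R.
Proof.
move=> ha hS hx; have h8 : (8 * S <= S * S)%R by nra.
have : (2 * (S * S) <= a * (S * S))%R by apply: Rmult_le_compat_r; nra.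
lra.
Qed.

End RealBounds.

Definition edit_gap (a : nat) (sz : nat -> nat) : Prop :=
  forall s n, 1 < s -> text_len [:: 2] s <= n ->
  exists T', [/\ size T' = sz n, ed (text [:: 2] s n) T' = 1 & a * (s * s) <= zSSsr T'].

Lemma edit_gap_subst : edit_gap 3 (fun n => n).
Proof.
move=> s n s1 hn; exists (text [:: 5] s n); split; rewrite ?size_text //.
  by apply: ed_text_subst; move: hn; rewrite /text_len /gadget_pos /=; nia.
by apply: (@zSSsr_text_ge [:: 5]); rewrite //; lia.
Qed.

Lemma edit_gap_delete : edit_gap 3 predn.
Proof.
move=> s n s1 hn; exists (text [::] s n.-1); split; rewrite ?size_text //.
  by apply: ed_text_delete; move: hn; rewrite /text_len /gadget_pos /=; nia.
by apply: (@zSSsr_text_ge [::]); rewrite //; move: hn; rewrite /text_len /gadget_pos /=; lia.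
Qed.

Lemma edit_gap_insert : edit_gap 2 succn.
Proof.
move=> s n s1 hn; exists (text [:: 5; 2] s n.+1); split; rewrite ?size_text //.
  by apply: ed_text_insert; move: hn; rewrite /text_len /gadget_pos /=; nia.
by apply: (@zSSsr_text_ge [:: 5; 2]); rewrite //; move: hn; rewrite /text_len /gadget_pos /=; lia.
Qed.

Section EditGapBounds.
Variables (a : nat) (sz : nat -> nat).
Hypothesis a_gt1 : 1 < a.
Hypothesis gap : edit_gap a sz.

Lemma edit_gap_real s n : 1 < s -> text_len [:: 2] s <= n ->
  exists T', [/\ size T' = sz n, ed (text [:: 2] s n) T' = 1,
    (INR s * INR s <= INR (zSSsr (text [:: 2%nat] s n)))%R,
    (INR (zSSsr (text [:: 2%nat] s n)) <= INR s * INR s + 3 * INR s + 4)%R &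
    (INR a * (INR s * INR s) <= INR (zSSsr T'))%R].
Proof.
move=> s1 hn; have [T' [hsz hed hz']] := gap s1 hn.
have /andP[z1 z2] := zSSsr_text2_bounds s1 hn.
exists T'; split => //; rewrite -?mult_INR; try exact: leq_INR.
by move: (leq_INR z2); rewrite !plus_INR !mult_INR /=; lra.
Qed.

Lemma edit_gap_ratio : forall eps : R, (0 < eps)%R -> exists N : nat, forall n : nat, N <= n ->
  exists T T' : string, size T = n /\ size T' = sz n /\ ed T T' = 1 /\
    (INR a - eps <= INR (zSSsr T') / INR (zSSsr T))%R.
Proof.
move=> eps he; have [m hm] := INR_archimed eps (5 * INR a) he.
exists (text_len [:: 2] (m + 2)) => n hn.
have [|T' [hsz hed z1 z2 z']] := edit_gap_real (_ : 1 < m + 2) hn; first lia.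
exists (text [:: 2] (m + 2) n), T'; rewrite size_text; do !split => //.
apply: (ratio_lower_bound (pos_INR a) z1 z2 z'); rewrite plus_INR /=; have := pos_INR m; lra.
Qed.

Lemma edit_gap_additive : exists c : R, (0 < c)%R /\ forall m : nat,
  exists T T' : string, size T' = sz (size T) /\ ed T T' = 1 /\ m <= zSSsr T /\
    ((INR a - 1) * INR (zSSsr T) - c * sqrt (INR (zSSsr T))
       <= INR (zSSsr T') - INR (zSSsr T))%R.
Proof.
have a0 : (0 < INR a)%R by apply: lt_0_INR; apply/ltP; lia.
exists (7 * INR a)%R; split => [|m]; first lra.
have s1 : 1 < m + 2 by lia.
have [T' [hsz hed z1 z2 z']] := edit_gap_real s1 (leqnn _).
exists (text [:: 2] (m + 2) (text_len [:: 2] (m + 2))), T'; rewrite size_text; do !split => //.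
  by have /andP[+ _] := zSSsr_text2_bounds s1 (leqnn _); nia.
apply: (additive_lower_bound (pos_INR a) z1 z2 z').
by rewrite plus_INR /=; have := pos_INR m; lra.
Qed.

Lemma edit_gap_sqrt : exists c : R, (0 < c)%R /\ exists N : nat, forall n : nat, N <= n ->
  exists T T' : string, size T = n /\ size T' = sz n /\ ed T T' = 1 /\
    (c * sqrt (INR n) <= INR (zSSsr T') - INR (zSSsr T))%R.
Proof.
exists (1 / 18)%R; split; first lra.
exists (256 * 256) => n /side_for_length [s8 hn hsq].
set s := Nat.sqrt (Nat.sqrt n) %/ 2 in s8 hn hsq.
have [|T' [hsz hed z1 z2 z']] := edit_gap_real (_ : 1 < s) hn; first lia.
exists (text [:: 2] s n), T'; rewrite size_text; do !split => //.
apply: (sqrt_lower_bound z2 z').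
- by have := leq_INR a_gt1; rewrite /=; lra.
- by have := leq_INR s8; rewrite /=; lra.
rewrite -(sqrt_square (9 * (INR s * INR s))); last by have := pos_INR s; nra.
by apply: sqrt_le_1_alt; move: (leq_INR hsq); rewrite !mult_INR /=; lra.
Qed.

End EditGapBounds.

Lemma edit_gap_bounds a sz : 1 < a -> edit_gap a sz ->
  (forall eps : R, (0 < eps)%R -> exists N : nat, forall n : nat, N <= n ->
     exists T T' : string, size T = n /\ size T' = sz n /\ ed T T' = 1 /\
       (INR a - eps <= INR (zSSsr T') / INR (zSSsr T))%R) /\
  (exists c : R, (0 < c)%R /\ forall m : nat,
     exists T T' : string, size T' = sz (size T) /\ ed T T' = 1 /\ m <= zSSsr T /\
       ((INR a - 1) * INR (zSSsr T) - c * sqrt (INR (zSSsr T))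
          <= INR (zSSsr T') - INR (zSSsr T))%R) /\
  (exists c : R, (0 < c)%R /\ exists N : nat, forall n : nat, N <= n ->
     exists T T' : string, size T = n /\ size T' = sz n /\ ed T T' = 1 /\
       (c * sqrt (INR n) <= INR (zSSsr T') - INR (zSSsr T))%R).
Proof.
move=> a_gt1 gap; split; [|split].
- exact: edit_gap_ratio gap.
- exact: edit_gap_additive a_gt1 gap.
- exact: edit_gap_sqrt a_gt1 gap.
Qed.
Theorem mainTheorem14 :
  (* ---------------- substitutions ---------------- *)
  (* liminf_n MS_sub(z_SSsr, n) >= 3 *)
  (forall eps : R, (0 < eps)%R -> exists N : nat, forall n : nat, (N <= n)%N ->
     exists T T' : seq nat, size T = n /\ size T' = n /\ ed T T' = 1%N /\
       (3 - eps <= INR (zSSsr T') / INR (zSSsr T))%R) /\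
  (* AS_sub >= 2 z - Theta(sqrt z), z = z_SSsr(T) arbitrarily large *)
  (exists c : R, (0 < c)%R /\ forall m : nat,
     exists T T' : seq nat, size T' = size T /\ ed T T' = 1%N /\ (m <= zSSsr T)%N /\
       (2 * INR (zSSsr T) - c * sqrt (INR (zSSsr T))
          <= INR (zSSsr T') - INR (zSSsr T))%R) /\
  (* AS_sub(z_SSsr, n) = Omega(sqrt n) *)
  (exists c : R, (0 < c)%R /\ exists N : nat, forall n : nat, (N <= n)%N ->
     exists T T' : seq nat, size T = n /\ size T' = n /\ ed T T' = 1%N /\
       (c * sqrt (INR n) <= INR (zSSsr T') - INR (zSSsr T))%R) /\
  (* ---------------- insertions ---------------- *)
  (forall eps : R, (0 < eps)%R -> exists N : nat, forall n : nat, (N <= n)%N ->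
     exists T T' : seq nat, size T = n /\ size T' = n.+1 /\ ed T T' = 1%N /\
       (2 - eps <= INR (zSSsr T') / INR (zSSsr T))%R) /\
  (exists c : R, (0 < c)%R /\ forall m : nat,
     exists T T' : seq nat, size T' = (size T).+1 /\ ed T T' = 1%N /\ (m <= zSSsr T)%N /\
       (INR (zSSsr T) - c * sqrt (INR (zSSsr T))
          <= INR (zSSsr T') - INR (zSSsr T))%R) /\
  (exists c : R, (0 < c)%R /\ exists N : nat, forall n : nat, (N <= n)%N ->
     exists T T' : seq nat, size T = n /\ size T' = n.+1 /\ ed T T' = 1%N /\
       (c * sqrt (INR n) <= INR (zSSsr T') - INR (zSSsr T))%R) /\
  (* ---------------- deletions ---------------- *)
  (forall eps : R, (0 < eps)%R -> exists N : nat, forall n : nat, (N <= n)%N ->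
     exists T T' : seq nat, size T = n /\ size T' = n.-1 /\ ed T T' = 1%N /\
       (3 - eps <= INR (zSSsr T') / INR (zSSsr T))%R) /\
  (exists c : R, (0 < c)%R /\ forall m : nat,
     exists T T' : seq nat, size T' = (size T).-1 /\ ed T T' = 1%N /\ (m <= zSSsr T)%N /\
       (2 * INR (zSSsr T) - c * sqrt (INR (zSSsr T))
          <= INR (zSSsr T') - INR (zSSsr T))%R) /\
  (exists c : R, (0 < c)%R /\ exists N : nat, forall n : nat, (N <= n)%N ->
     exists T T' : seq nat, size T = n /\ size T' = n.-1 /\ ed T T' = 1%N /\
       (c * sqrt (INR n) <= INR (zSSsr T') - INR (zSSsr T))%R).
Proof.
have INR2 : INR 2 = 2%R by rewrite /=; lra.
have INR3 : INR 3 = 3%R by rewrite /=; lra.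
have [sr [sa so]] := edit_gap_bounds (isT : 1 < 3) edit_gap_subst.
have [ir [ia io]] := edit_gap_bounds (isT : 1 < 2) edit_gap_insert.
have [dr [da do']] := edit_gap_bounds (isT : 1 < 3) edit_gap_delete.
rewrite INR3 (_ : (3 - 1 = 2)%R) in sr sa dr da; last lra.
rewrite INR2 (_ : (2 - 1 = 1)%R) in ir ia; last lra.
setoid_rewrite Rmult_1_l in ia.
exact: (conj sr (conj sa (conj so (conj ir (conj ia (conj io (conj dr (conj da do')))))))).
Qed.
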